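(* Let $n\ge2$, $r>0$, $\varepsilon_r>0$, $\rho^*>0$, $\omega^*\in\mathbb R$, $k_\rho,k_z,k_\phi>0$. Consider the closed-loop system, for $i=1,\dots,n$, $$\dot\rho_i=\lambda(\rho_i,\sigma(t))\,k_\rho(\rho^*-\rho_i),\qquad \dot\phi_i=\omega^*+k_\phi(\bar\phi_i-\phi_i),\qquad \dot z_i=-k_zz_i,$$ where $\sigma(t)=r/|\sin(\delta_{\min}(t)/2)|$, $\delta_{\min}(t)=\min_k\delta_k(t)$, and $$\lambda(\rho,\sigma)=\begin{cases}0 & \rho<\sigma+2r,\\ 1 & \rho>\sigma+2r+\varepsilon_r,\\ (\rho-\sigma-2r)/\varepsilon_r & \text{otherwise.}\end{cases}$$ Assume $\delta_k(t_0)>0$ for all $k$. Then: (1) if $\rho_i(t_0)>\frac{r}{|\sin(\pi/n)|}+2r$ for all $i$ and $|\rho_i(t_0)-\rho_j(t_0)|\ge2r$ for all $i\neq j$, then $D_{ij}(t)>2r$ for all $i\ne j$ and all $t\ge t_0$ (no collisions); (2) for every initial condition, $\phi_i-\bar\phi_i\to0$, $\dot\phi_i\to\omega^*$ and $z_i\to0$ exponentially for all $i$; moreover, if in addition $\rho^*>\frac{r}{|\sin(\pi/n)|}+2r$ and $\rho_i(t_0)>\frac{r}{|\sin(\pi/n)|}+2r$ and $|\rho_i(t_0)-\rho_j(t_0)|\ge 2r$ for all $j\ne i$, then $\rho_i\to\rho^*$ exponentially.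
   Context: Robots have cylindrical coordinates $(\rho_i,\phi_i,z_i)$ (radius, phase, height) relative to a target frame, with dynamics after feedback transformation $\dot\rho_i,\dot\phi_i,\dot z_i$ equal to free inputs. Phases are real-valued (not reduced modulo $2\pi$), robots indexed counterclockwise at $t_0$. Phase averages: $\bar\phi_1=\frac{\phi_2+\phi_n-2\pi}{2}$, $\bar\phi_i=\frac{\phi_{i+1}+\phi_{i-1}}{2}$ for $2\le i\le n-1$, $\bar\phi_n=\frac{\phi_1+2\pi+\phi_{n-1}}{2}$. Consecutive phase differences: $\delta_1=\phi_1-\phi_n+2\pi$, $\delta_k=\phi_k-\phi_{k-1}$ for $2\le k\le n$. Distance $D_{ij}=\sqrt{\rho_i^2+\rho_j^2-2\rho_i\rho_j\cos(\phi_j-\phi_i)+(z_j-z_i)^2}$; a collision means $D_{ij}\le 2r$, with $r$ the safety radius. *)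

(* classical reals. Robots indexed 1..n. *)
From Stdlib Require Import Reals List.
Import ListNotations.
Open Scope R_scope.

Definition phibar (n : nat) (phi : nat -> R -> R) (i : nat) (t : R) : R :=
  if Nat.eqb i 1 then (phi 2%nat t + phi n t - 2 * PI) / 2
  else if Nat.eqb i n then (phi 1%nat t + 2 * PI + phi (n - 1)%nat t) / 2
  else (phi (i + 1)%nat t + phi (i - 1)%nat t) / 2.

Definition delta (n : nat) (phi : nat -> R -> R) (k : nat) (t : R) : R :=
  if Nat.eqb k 1 then phi 1%nat t - phi n t + 2 * PI
  else phi k t - phi (k - 1)%nat t.

Definition delta_min (n : nat) (phi : nat -> R -> R) (t : R) : R :=
  fold_right Rmin (delta n phi 1%nat t) (map (fun k => delta n phi k t) (seq 1 n)).

Definition sigma (r : R) (n : nat) (phi : nat -> R -> R) (t : R) : R :=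
  r / Rabs (sin (delta_min n phi t / 2)).

Definition lam (r eps_r rho sig : R) : R :=
  if Rlt_dec rho (sig + 2 * r) then 0
  else if Rlt_dec (sig + 2 * r + eps_r) rho then 1
  else (rho - sig - 2 * r) / eps_r.

Definition Dist (rhoi phii zi rhoj phij zj : R) : R :=
  sqrt (rhoi ^ 2 + rhoj ^ 2 - 2 * rhoi * rhoj * cos (phij - phii) + (zj - zi) ^ 2).

Definition right_cont_at (f : R -> R) (t0 : R) : Prop :=
  forall eps, 0 < eps -> exists d, 0 < d /\
    forall t, t0 <= t < t0 + d -> Rabs (f t - f t0) < eps.

Definition exp_conv (f : R -> R) (L t0 : R) : Prop :=
  exists C a, 0 < a /\ forall t, t0 <= t -> Rabs (f t - L) <= C * exp (- a * (t - t0)).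

Definition closed_loop_solution (n : nat) (r eps_r rhostar omega krho kz kphi t0 : R)
    (rho phi z : nat -> R -> R) : Prop :=
  forall i, (1 <= i <= n)%nat ->
    right_cont_at (rho i) t0 /\ right_cont_at (phi i) t0 /\ right_cont_at (z i) t0 /\
    forall t, t0 < t ->
      derivable_pt_lim (rho i) t
        (lam r eps_r (rho i t) (sigma r n phi t) * krho * (rhostar - rho i t)) /\
      derivable_pt_lim (phi i) t (omega + kphi * (phibar n phi i t - phi i t)) /\
      derivable_pt_lim (z i) t (- kz * z i t).

(* The phase subsystem is autonomous.  The cyclic phase gaps delta_k have
   consecutive differences gap_diff_k = 2 (phibar - phi) at one robot, and
   these obey a discrete heat equation on the cycle Z/n.  Summation by parts
   and a discrete Poincare inequality make the energy sum_k gap_diff_k^2 decay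
   exponentially, which gives part (2) for phases and frequencies.  A penalty
   argument gives a minimum principle: delta_min is nondecreasing, so the
   phases stay ordered, distinct robots are delta_min apart in phase, and the
   safety radius sigma is nonincreasing and eventually close to
   r / sin(PI/n).  Since lam vanishes inside sigma + 2r, each robot either
   has not moved radially or lies outside that disc; the law of cosines then
   gives part (1).  Finally rho - rhostar and z solve linear equations whose
   gains are eventually bounded below.  Every monotonicity step rests on one
   comparison principle for right-continuous functions ([decay]). *)

From Pilot Require Import Defs.
From Stdlib Require Import Reals List Lra Lia.
Open Scope R_scope.

(* The closed-loop
   solution is only assumed right-continuous at t0 and differentiable after
   t0, so these are the regularity facts the comparison arguments use. *)

Lemma cont_eps (g : R -> R) x : continuity_pt g x ->
  forall eps, 0 < eps -> exists d, 0 < d /\ forall y, Rabs (y - x) < d -> Rabs (g y - g x) < eps.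
Proof.
  intros H eps He. destruct (H eps He) as [d [Hd Hy]].
  exists d. split; auto. intros y Hyx.
  destruct (Req_dec y x) as [->|Hne].
  - rewrite Rminus_diag, Rabs_R0; auto.
  - apply (Hy y). split; [split; [exact I|auto]|auto].
Qed.

Lemma rc_of_cont g a : continuity_pt g a -> right_cont_at g a.
Proof.
  intros H eps He. destruct (cont_eps g a H eps He) as [d [Hd Hy]].
  exists d; split; auto. intros t Ht. apply Hy. rewrite Rabs_right; lra.
Qed.

Lemma rc_ext (f g : R -> R) a : (forall y, f y = g y) -> right_cont_at f a -> right_cont_at g a.
Proof.
  intros E H eps He. destruct (H eps He) as [d [Hd Hd']]. exists d. split; auto.
  intros t Ht. rewrite <- !E. auto.
Qed.

Lemma rc_comp g f a : right_cont_at f a -> continuity_pt g (f a) ->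
  right_cont_at (fun t => g (f t)) a.
Proof.
  intros Hf Hg eps He. destruct (cont_eps g (f a) Hg eps He) as [d [Hd Hy]].
  destruct (Hf d Hd) as [d' [Hd' H']]. exists d'; split; [exact Hd'|].
  intros t Ht. apply Hy. apply H'; auto.
Qed.

Lemma rc_const c a : right_cont_at (fun _ => c) a.
Proof. apply rc_of_cont, continuity_pt_const. intros x y; reflexivity. Qed.

Lemma rc_plus f g a : right_cont_at f a -> right_cont_at g a ->
  right_cont_at (fun t => f t + g t) a.
Proof.
  intros Hf Hg eps He.
  destruct (Hf (eps/2)) as [d1 [Hd1 H1]]; [lra|].
  destruct (Hg (eps/2)) as [d2 [Hd2 H2]]; [lra|].
  exists (Rmin d1 d2); split; [apply Rmin_glb_lt; auto|].
  intros t Ht. pose proof (Rmin_l d1 d2). pose proof (Rmin_r d1 d2).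
  specialize (H1 t ltac:(lra)). specialize (H2 t ltac:(lra)).
  replace (f t + g t - (f a + g a)) with ((f t - f a) + (g t - g a)) by ring.
  eapply Rle_lt_trans; [apply Rabs_triang|lra].
Qed.

Lemma rc_mult f g a : right_cont_at f a -> right_cont_at g a ->
  right_cont_at (fun t => f t * g t) a.
Proof.
  intros Hf Hg eps He.
  set (M := Rabs (f a) + Rabs (g a) + 1).
  pose proof (Rabs_pos (f a)); pose proof (Rabs_pos (g a)).
  assert (HM : 0 < M) by (unfold M; lra).
  set (e := Rmin 1 (eps / (2 * M))).
  assert (He1 : 0 < e) by (apply Rmin_glb_lt; [lra| apply Rdiv_lt_0_compat; lra]).
  assert (Hee : e <= 1) by apply Rmin_l.
  assert (HeM : e * M <= eps / 2).
  { apply Rle_trans with (eps / (2 * M) * M).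
    - apply Rmult_le_compat_r; [lra|apply Rmin_r].
    - right; field; lra. }
  destruct (Hf e He1) as [d1 [Hd1 H1]].
  destruct (Hg e He1) as [d2 [Hd2 H2]].
  exists (Rmin d1 d2); split; [apply Rmin_glb_lt; auto|].
  intros t Ht. pose proof (Rmin_l d1 d2). pose proof (Rmin_r d1 d2).
  specialize (H1 t ltac:(lra)). specialize (H2 t ltac:(lra)).
  replace (f t * g t - f a * g a)
    with ((f t - f a) * (g t - g a) + (f t - f a) * g a + f a * (g t - g a)) by ring.
  pose proof (Rabs_pos (f t - f a)); pose proof (Rabs_pos (g t - g a)).
  eapply Rle_lt_trans; [apply Rabs_triang|].
  eapply Rle_lt_trans; [apply Rplus_le_compat_r, Rabs_triang|].
  rewrite !Rabs_mult. unfold M in HeM. nra.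
Qed.

Lemma rc_minus f g a : right_cont_at f a -> right_cont_at g a ->
  right_cont_at (fun t => f t - g t) a.
Proof.
  intros Hf Hg. apply (rc_ext (fun t => f t + (-1) * g t)); [intros; ring|].
  apply rc_plus; auto. apply (rc_mult (fun _ => -1) g); auto using rc_const.
Qed.

(* Stdlib's derivative rules, restated on explicit lambda terms so that
   [apply] can infer the component functions. *)

Lemma dmult f g x a b : derivable_pt_lim f x a -> derivable_pt_lim g x b ->
  derivable_pt_lim (fun y => f y * g y) x (a * g x + f x * b).
Proof. intros. apply (derivable_pt_lim_mult f g x a b); auto. Qed.

Lemma dplus f g x a b : derivable_pt_lim f x a -> derivable_pt_lim g x b ->
  derivable_pt_lim (fun y => f y + g y) x (a + b).
Proof. intros. apply (derivable_pt_lim_plus f g x a b); auto. Qed.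

Lemma dminus f g x a b : derivable_pt_lim f x a -> derivable_pt_lim g x b ->
  derivable_pt_lim (fun y => f y - g y) x (a - b).
Proof. intros. apply (derivable_pt_lim_minus f g x a b); auto. Qed.

Lemma dcomp (f g : R -> R) x a b : derivable_pt_lim f x a -> derivable_pt_lim g (f x) b ->
  derivable_pt_lim (fun y => g (f y)) x (b * a).
Proof. intros. apply (derivable_pt_lim_comp f g x a b); auto. Qed.

Lemma dext f x a b : derivable_pt_lim f x a -> a = b -> derivable_pt_lim f x b.
Proof. intros H ->; auto. Qed.

Lemma dextf (f g : R -> R) x l :
  (forall y, f y = g y) -> derivable_pt_lim f x l -> derivable_pt_lim g x l.
Proof.
  intros E H eps He. destruct (H eps He) as [d Hd]. exists d. intros h Hh Hhd.
  rewrite <- !E. apply Hd; auto.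
Qed.

Lemma dsquare f x a : derivable_pt_lim f x a ->
  derivable_pt_lim (fun y => f y ^ 2) x (2 * f x * a).
Proof.
  intros H. apply (dextf (fun y => f y * f y)); [intros; ring|].
  eapply dext; [apply dmult; exact H|ring].
Qed.

Lemma dcont f x l : derivable_pt_lim f x l -> continuity_pt f x.
Proof. intros H. apply derivable_continuous_pt. exists l; exact H. Qed.

Lemma rc_of_deriv (f f' : R -> R) a s : a <= s -> right_cont_at f a ->
  (forall t, a < t -> derivable_pt_lim f t (f' t)) -> right_cont_at f s.
Proof.
  intros Hs Hrc Hd. destruct (Req_dec s a) as [->|Hne]; auto.
  apply rc_of_cont. eapply dcont. apply Hd. lra.
Qed.

(* Comparison principle (Gronwall): f' <= -c f on (a,b] and right continuity
   at a give f b <= f a e^{-c(b-a)}.  Proof: e^{c(s-a)} f s is nonincreasing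
   on (a,b] by the mean value theorem, and right continuity reaches s = a. *)
Lemma decay (f f' : R -> R) (c a b : R) : a <= b ->
  (forall s, a < s <= b -> derivable_pt_lim f s (f' s)) ->
  (forall s, a < s <= b -> f' s <= - c * f s) ->
  right_cont_at f a -> f b <= f a * exp (- c * (b - a)).
Proof.
  intros Hab Hd Hle Hrc.
  destruct (Req_dec a b) as [<-|Hne].
  { replace (- c * (a - a)) with 0 by ring. rewrite exp_0. lra. }
  set (h := fun s => f s * exp (c * (s - a))).
  set (h' := fun s => f' s * exp (c * (s - a)) + f s * (c * exp (c * (s - a)))).
  assert (Hexp : forall s, derivable_pt_lim (fun s => exp (c * (s - a))) s (exp (c * (s - a)) * c)).
  { intros s. eapply dext.
    - apply (dcomp (fun s => c * (s - a)) exp); [|apply derivable_pt_lim_exp].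
      apply (dmult (fun _ => c) (fun s => s - a)); [apply derivable_pt_lim_const|].
      apply (dminus (fun y => y) (fun _ => a));
        [apply derivable_pt_lim_id|apply derivable_pt_lim_const].
    - ring. }
  assert (Hhd : forall s, a < s <= b -> derivable_pt_lim h s (h' s)).
  { intros s Hs. unfold h, h'. eapply dext.
    - apply (dmult f (fun s => exp (c * (s - a)))); [apply Hd; auto|apply Hexp].
    - ring. }
  assert (Hmono : forall s, a < s < b -> h b <= h s).
  { intros s Hs. destruct (MVT_cor2 h h' s b ltac:(lra)) as [x [Hx1 Hx2]].
    { intros x Hx. apply Hhd. lra. }
    assert (h' x <= 0).
    { unfold h'. specialize (Hle x ltac:(lra)). pose proof (exp_pos (c * (x - a))). nra. }
    nra. }
  assert (Hrch : right_cont_at h a).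
  { apply rc_mult; auto. apply rc_of_cont. eapply dcont. apply Hexp. }
  assert (Hha : h b <= h a).
  { destruct (Rle_dec (h b) (h a)) as [H|H]; auto. exfalso.
    destruct (Hrch (h b - h a) ltac:(lra)) as [d [Hd0 Hd1]].
    set (s := a + Rmin d (b - a) / 2).
    assert (0 < Rmin d (b - a)) by (apply Rmin_glb_lt; lra).
    pose proof (Rmin_l d (b - a)); pose proof (Rmin_r d (b - a)).
    specialize (Hd1 s ltac:(unfold s; lra)). specialize (Hmono s ltac:(unfold s; lra)).
    apply Rabs_def2 in Hd1. lra. }
  unfold h in Hha. replace (c * (a - a)) with 0 in Hha by ring. rewrite exp_0 in Hha.
  replace (f b) with (f b * exp (c * (b - a)) * exp (- c * (b - a))).
  2:{ rewrite Rmult_assoc, <- exp_plus. replace (c * (b - a) + - c * (b - a)) with 0 by ring.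
      rewrite exp_0; ring. }
  apply Rmult_le_compat_r; [left; apply exp_pos|lra].
Qed.

Lemma nonincreasing (f f' : R -> R) a b : a <= b ->
  (forall s, a < s <= b -> derivable_pt_lim f s (f' s)) ->
  (forall s, a < s <= b -> f' s <= 0) ->
  right_cont_at f a -> f b <= f a.
Proof.
  intros Hab Hd Hle Hrc.
  pose proof (decay f f' 0 a b Hab Hd ltac:(intros s Hs; specialize (Hle s Hs); lra) Hrc) as H.
  replace (- 0 * (b - a)) with 0 in H by ring. rewrite exp_0, Rmult_1_r in H. exact H.
Qed.

Lemma constant_of_zero_deriv (f f' : R -> R) a b : a <= b ->
  (forall s, a < s <= b -> derivable_pt_lim f s (f' s)) ->
  (forall s, a < s <= b -> f' s = 0) ->
  right_cont_at f a -> f b = f a.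
Proof.
  intros Hab Hd H0 Hrc.
  assert (f b <= f a) by (apply (nonincreasing f f'); auto; intros s Hs; rewrite H0; auto; lra).
  assert (- f b <= - f a); [|lra].
  apply (nonincreasing (fun t => - f t) (fun t => - f' t)); auto.
  - intros s Hs. apply (dextf (fun y => 0 - f y)); [intros; ring|].
    eapply dext; [apply (dminus (fun _ => 0) f); [apply derivable_pt_lim_const|apply Hd; auto]|ring].
  - intros s Hs. rewrite H0; auto. lra.
  - apply (rc_ext (fun y => 0 - f y)); [intros; ring|]. apply (rc_minus (fun _ => 0) f); auto using rc_const.
Qed.

(* The negative part x |-> min(0,x).  Its square is C^1, which turns sign
   (invariance) statements into the comparison principle. *)
Definition negpart (x : R) : R := Rmin 0 x.

Lemma negpart_sq_deriv x : derivable_pt_lim (fun y => negpart y ^ 2) x (2 * negpart x).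
Proof.
  intros eps He. exists (mkposreal eps He). intros h Hh Hhe. simpl in Hhe.
  assert (Hb : Rabs (negpart (x + h) ^ 2 - negpart x ^ 2 - 2 * negpart x * h) <= h * h).
  { unfold negpart, Rmin. destruct (Rle_dec 0 (x + h)); destruct (Rle_dec 0 x);
    rewrite Rabs_right || rewrite Rabs_left1; nra. }
  replace ((negpart (x + h) ^ 2 - negpart x ^ 2) / h - 2 * negpart x)
    with ((negpart (x + h) ^ 2 - negpart x ^ 2 - 2 * negpart x * h) / h) by (field; auto).
  unfold Rdiv. rewrite Rabs_mult, Rabs_inv.
  apply Rle_lt_trans with (h * h * / Rabs h).
  - apply Rmult_le_compat_r; auto. left; apply Rinv_0_lt_compat, Rabs_pos_lt; auto.
  - replace (h * h) with (Rabs h * Rabs h) by (rewrite <- Rabs_mult; apply Rabs_right; nra).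
    rewrite Rmult_assoc, Rinv_r, Rmult_1_r by (apply Rabs_no_R0; auto). auto.
Qed.

Lemma negpart_sq_comp_deriv (x : R -> R) s l : derivable_pt_lim x s l ->
  derivable_pt_lim (fun t => negpart (x t) ^ 2) s (2 * negpart (x s) * l).
Proof.
  intros H. eapply dext; [apply (dcomp x (fun y => negpart y ^ 2)); [exact H|apply negpart_sq_deriv]|ring].
Qed.

Lemma negpart_sq_rc (x : R -> R) a : right_cont_at x a ->
  right_cont_at (fun t => negpart (x t) ^ 2) a.
Proof. intros H. apply (rc_comp (fun y => negpart y ^ 2) x); auto. eapply dcont, negpart_sq_deriv. Qed.

Lemma negpart_mul_le a b : negpart a * b <= negpart a * negpart b.
Proof. unfold negpart, Rmin. destruct (Rle_dec 0 a); destruct (Rle_dec 0 b); nra. Qed.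

Lemma negpart_mul_self a : negpart a * a = negpart a ^ 2.
Proof. unfold negpart, Rmin. destruct (Rle_dec 0 a); nra. Qed.

Lemma negpart_sq_zero a : negpart a ^ 2 <= 0 -> 0 <= a.
Proof. unfold negpart, Rmin. destruct (Rle_dec 0 a); [auto|nra]. Qed.

Lemma nonneg_preserved (x x' : R -> R) a b : a <= b ->
  (forall s, a < s <= b -> derivable_pt_lim x s (x' s)) ->
  (forall s, a < s <= b -> x s < 0 -> 0 <= x' s) ->
  right_cont_at x a -> 0 <= x a -> 0 <= x b.
Proof.
  intros Hab Hd Hsign Hrc H0.
  apply negpart_sq_zero.
  replace 0 with (negpart (x a) ^ 2) by (unfold negpart; rewrite Rmin_left by lra; ring).
  apply (nonincreasing (fun t => negpart (x t) ^ 2) (fun s => 2 * negpart (x s) * x' s)); auto.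
  - intros s Hs. apply negpart_sq_comp_deriv, Hd; auto.
  - intros s Hs. unfold negpart, Rmin. destruct (Rle_dec 0 (x s)); [lra|].
    specialize (Hsign s Hs ltac:(lra)). nra.
  - apply negpart_sq_rc; auto.
Qed.

Section LinearDecay.
Variables (w L : R -> R) (a : R).
Hypothesis w_deriv : forall t, a < t -> derivable_pt_lim w t (- L t * w t).
Hypothesis L_nonneg : forall t, a < t -> 0 <= L t.
Hypothesis w_rc : right_cont_at w a.

Lemma lin_decay b c t : a <= b -> right_cont_at w b -> 0 <= c ->
  (forall s, b < s -> c <= L s) -> b <= t ->
  w t ^ 2 <= w b ^ 2 * exp (- (2 * c) * (t - b)).
Proof.
  intros Hab Hrcb Hc HLc Ht.
  apply (decay (fun t => w t ^ 2) (fun t => 2 * w t * (- L t * w t))); auto.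
  - intros s Hs. apply dsquare, w_deriv. lra.
  - intros s Hs. specialize (HLc s ltac:(lra)). pose proof (pow2_ge_0 (w s)). nra.
  - apply (rc_ext (fun y => w y * w y)); [intros; ring|]. apply rc_mult; auto.
Qed.

Lemma lin_abs_nonincreasing t : a <= t -> w t ^ 2 <= w a ^ 2.
Proof.
  intros Ht. pose proof (lin_decay a 0 t (Rle_refl a) w_rc (Rle_refl 0) L_nonneg Ht) as H.
  replace (- (2 * 0) * (t - a)) with 0 in H by ring. rewrite exp_0 in H. lra.
Qed.

Lemma lin_sign t : 0 <= w a -> a <= t -> 0 <= w t.
Proof.
  intros H0 Ht. apply (nonneg_preserved w (fun s => - L s * w s) a t); auto.
  - intros s Hs. apply w_deriv. lra.
  - intros s Hs Hneg. pose proof (L_nonneg s ltac:(lra)). nra.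
Qed.

End LinearDecay.

Lemma exp_conv_of_sq f l t0 E0 c K : 0 < c -> 0 <= K ->
  (forall t, t0 <= t -> (f t - l) ^ 2 <= K * (E0 * exp (- c * (t - t0)))) -> exp_conv f l t0.
Proof.
  intros Hc HK H.
  assert (HE : 0 <= K * E0).
  { specialize (H t0 (Rle_refl _)). replace (- c * (t0 - t0)) with 0 in H by ring.
    rewrite exp_0, Rmult_1_r in H. pose proof (pow2_ge_0 (f t0 - l)). lra. }
  exists (sqrt (K * E0)), (c / 2). split; [lra|]. intros t Ht.
  specialize (H t Ht).
  assert (Hx : exp (- c * (t - t0)) = exp (- (c/2) * (t - t0)) * exp (- (c/2) * (t - t0))).
  { rewrite <- exp_plus. f_equal. field. }
  rewrite <- sqrt_Rsqr_abs, <- (sqrt_square (exp (- (c/2) * (t - t0)))) by (left; apply exp_pos).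
  rewrite <- sqrt_mult_alt by auto. apply sqrt_le_1_alt. rewrite Rsqr_pow2, <- Hx. lra.
Qed.

Lemma lin_exp_conv (w L : R -> R) a T c :
  (forall t, a < t -> derivable_pt_lim w t (- L t * w t)) ->
  (forall t, a < t -> 0 <= L t) -> right_cont_at w a ->
  a <= T -> 0 < c -> (forall s, T < s -> c <= L s) -> exp_conv w 0 a.
Proof.
  intros Hd HL Hrc HT Hc HLc.
  set (k := 2 * c).
  apply (exp_conv_of_sq w 0 a (w a ^ 2) k (exp (k * (T - a)))); [unfold k; lra|left; apply exp_pos|].
  intros t Ht. rewrite Rminus_0_r.
  assert (E : exp (k * (T - a)) * (w a ^ 2 * exp (- k * (t - a)))
              = w a ^ 2 * exp (- k * (t - T))).
  { replace (- k * (t - T)) with (k * (T - a) + - k * (t - a)) by ring. rewrite exp_plus. ring. }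
  rewrite E. pose proof (pow2_ge_0 (w a)).
  destruct (Rle_dec t T) as [HtT|HtT].
  - assert (1 <= exp (- k * (t - T))).
    { pose proof (exp_ineq1_le (- k * (t - T))). unfold k in *. nra. }
    pose proof (lin_abs_nonincreasing w L a Hd HL Hrc t Ht). nra.
  - pose proof (lin_decay w L a Hd T c t HT (rc_of_deriv w (fun s => - L s * w s) a T HT Hrc Hd)
      ltac:(lra) HLc ltac:(lra)) as Htail.
    pose proof (lin_abs_nonincreasing w L a Hd HL Hrc T HT).
    fold k in Htail. pose proof (exp_pos (- k * (t - T))). nra.
Qed.

Fixpoint rsum (f : nat -> R) (n : nat) : R :=
  match n with O => 0 | S m => rsum f m + f m end.

Lemma rsum_ext f g n : (forall k, (k < n)%nat -> f k = g k) -> rsum f n = rsum g n.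
Proof. induction n; simpl; intros H; auto. rewrite IHn, H; auto; intros; apply H; lia. Qed.

Lemma rsum_plus f g n : rsum (fun k => f k + g k) n = rsum f n + rsum g n.
Proof. induction n; simpl; [ring|rewrite IHn; ring]. Qed.

Lemma rsum_minus f g n : rsum (fun k => f k - g k) n = rsum f n - rsum g n.
Proof. induction n; simpl; [ring|rewrite IHn; ring]. Qed.

Lemma rsum_scal c f n : rsum (fun k => c * f k) n = c * rsum f n.
Proof. induction n; simpl; [ring|rewrite IHn; ring]. Qed.

Lemma rsum_const c n : rsum (fun _ => c) n = INR n * c.
Proof. induction n; simpl rsum; [simpl; ring|rewrite IHn, S_INR; ring]. Qed.

Lemma rsum_le f g n : (forall k, (k < n)%nat -> f k <= g k) -> rsum f n <= rsum g n.
Proof.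
  induction n; simpl; intros H; [lra|].
  apply Rplus_le_compat; [apply IHn; intros; apply H; lia| apply H; lia].
Qed.

Lemma rsum_nonneg f n : (forall k, (k < n)%nat -> 0 <= f k) -> 0 <= rsum f n.
Proof. intros H. replace 0 with (rsum (fun _ => 0) n) by (rewrite rsum_const; ring). apply rsum_le; auto. Qed.

Lemma rsum_mono f n m : (forall k, (k < m)%nat -> 0 <= f k) -> (n <= m)%nat -> rsum f n <= rsum f m.
Proof.
  intros H Hnm. induction Hnm; [lra|]. simpl. pose proof (H m ltac:(lia)).
  assert (rsum f n <= rsum f m) by (apply IHHnm; intros; apply H; lia). lra.
Qed.

Lemma rsum_term_le f n k : (forall k, (k < n)%nat -> 0 <= f k) -> (k < n)%nat -> f k <= rsum f n.
Proof.
  intros H Hk. apply Rle_trans with (rsum f (S k)).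
  - simpl. pose proof (rsum_nonneg f k ltac:(intros; apply H; lia)). lra.
  - apply rsum_mono; auto.
Qed.

Lemma rsum_abs f n : Rabs (rsum f n) <= rsum (fun k => Rabs (f k)) n.
Proof. induction n; simpl; [rewrite Rabs_R0; lra|]. eapply Rle_trans; [apply Rabs_triang|lra]. Qed.

Lemma rsum_telescope f n : rsum (fun k => f (S k) - f k) n = f n - f O.
Proof. induction n; simpl; [ring|rewrite IHn; ring]. Qed.

Definition periodic (f : nat -> R) (n : nat) : Prop := forall k, f (k + n)%nat = f k.

Lemma rsum_shift f n : periodic f n -> rsum (fun k => f (S k)) n = rsum f n.
Proof.
  intros H. assert (E : rsum (fun k => f (S k) - f k) n = 0).
  { rewrite rsum_telescope, <- (H O). simpl. ring. }
  rewrite rsum_minus in E. lra.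
Qed.

Lemma rsum_deriv (F F' : nat -> R -> R) n t :
  (forall k, (k < n)%nat -> derivable_pt_lim (F k) t (F' k t)) ->
  derivable_pt_lim (fun s => rsum (fun k => F k s) n) t (rsum (fun k => F' k t) n).
Proof.
  induction n; intros H; simpl.
  - apply derivable_pt_lim_const.
  - apply dplus; [apply IHn; intros; apply H; lia|apply H; lia].
Qed.

Lemma rsum_rc (F : nat -> R -> R) n a :
  (forall k, (k < n)%nat -> right_cont_at (F k) a) ->
  right_cont_at (fun s => rsum (fun k => F k s) n) a.
Proof.
  induction n; intros H; simpl.
  - apply rc_const.
  - apply rc_plus; [apply IHn; intros; apply H; lia|apply H; lia].
Qed.

Lemma cyclic_laplacian f n : (1 <= n)%nat -> periodic f n ->
  rsum (fun k => f k * (f (S k) - 2 * f k + f (k + n - 1)%nat)) n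
  = - rsum (fun k => (f (S k) - f k) ^ 2) n.
Proof.
  intros Hn Hp.
  assert (Hback : rsum (fun k => f k * f (k + n - 1)%nat) n = rsum (fun k => f (S k) * f k) n).
  { rewrite <- (rsum_shift (fun k => f k * f (k + n - 1)%nat)).
    - apply rsum_ext; intros k _. replace (S k + n - 1)%nat with (k + n)%nat by lia. rewrite Hp; ring.
    - intros k. replace (k + n + n - 1)%nat with ((k + n - 1) + n)%nat by lia. rewrite !Hp; auto. }
  assert (Hsq : rsum (fun k => f (S k) ^ 2) n = rsum (fun k => f k ^ 2) n).
  { apply (rsum_shift (fun k => f k ^ 2)). intros k; rewrite Hp; auto. }
  transitivity (rsum (fun k => f k * f (S k)) n + rsum (fun k => f (S k) * f k) n
                - 2 * rsum (fun k => f k ^ 2) n).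
  { rewrite <- Hback, <- rsum_scal, <- rsum_plus, <- rsum_minus. apply rsum_ext; intros; ring. }
  rewrite <- Hsq at 1.
  transitivity (- (rsum (fun k => f (S k) ^ 2) n - 2 * rsum (fun k => f k * f (S k)) n
                   + rsum (fun k => f k ^ 2) n)).
  { rewrite Hsq. replace (rsum (fun k => f (S k) * f k) n) with (rsum (fun k => f k * f (S k)) n)
      by (apply rsum_ext; intros; ring). ring. }
  f_equal. rewrite <- rsum_scal, <- rsum_minus, <- rsum_plus. apply rsum_ext; intros; ring.
Qed.

Lemma poincare f n : (1 <= n)%nat -> periodic f n -> rsum f n = 0 ->
  rsum (fun k => f k ^ 2) n <= 4 * INR n ^ 3 * rsum (fun k => (f (S k) - f k) ^ 2) n.
Proof.
  intros Hn Hp H0.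
  set (h := fun m => f (S m) - f m).
  set (Q := rsum (fun k => h k ^ 2) n).
  assert (HQ0 : 0 <= Q) by (apply rsum_nonneg; intros; apply pow2_ge_0).
  assert (Hnpos : 0 < INR n) by (apply lt_0_INR; lia).
  assert (Hh : forall m, (m < n)%nat -> Rabs (h m) <= sqrt Q).
  { intros m Hm. rewrite <- sqrt_Rsqr_abs. apply sqrt_le_1_alt. rewrite Rsqr_pow2.
    apply (rsum_term_le (fun k => h k ^ 2)); auto. intros; apply pow2_ge_0. }
  set (V := rsum (fun k => Rabs (h k)) n).
  (* V, the total variation over one period, bounds every oscillation. *)
  assert (HV : V <= INR n * sqrt Q) by (unfold V; rewrite <- rsum_const; apply rsum_le; auto).
  assert (Hf0 : forall j, (j <= n)%nat -> Rabs (f j - f O) <= V).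
  { intros j Hj. rewrite <- rsum_telescope. eapply Rle_trans; [apply rsum_abs|].
    apply rsum_mono; auto. intros; apply Rabs_pos. }
  assert (Hosc : forall k j, (k <= n)%nat -> (j <= n)%nat -> Rabs (f k - f j) <= 2 * V).
  { intros k j Hk Hj. replace (f k - f j) with ((f k - f O) + - (f j - f O)) by ring.
    eapply Rle_trans; [apply Rabs_triang|]. rewrite Rabs_Ropp.
    pose proof (Hf0 k Hk); pose proof (Hf0 j Hj); lra. }
  (* zero mean: n f_k = sum_j (f_k - f_j). *)
  assert (Hk : forall k, (k < n)%nat -> Rabs (f k) <= 2 * V).
  { intros k Hk.
    assert (E : INR n * f k = rsum (fun j => f k - f j) n) by (rewrite rsum_minus, rsum_const, H0; ring).
    assert (Rabs (INR n * f k) <= INR n * (2 * V)).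
    { rewrite E. eapply Rle_trans; [apply rsum_abs|]. rewrite <- rsum_const.
      apply rsum_le. intros; apply Hosc; lia. }
    rewrite Rabs_mult, (Rabs_right (INR n)) in H by lra.
    apply Rmult_le_reg_l with (INR n); auto. }
  assert (Hsq : forall k, (k < n)%nat -> f k ^ 2 <= 4 * INR n ^ 2 * Q).
  { intros k Hk'. specialize (Hk k Hk'). pose proof (Rabs_pos (f k)).
    pose proof (sqrt_sqrt Q HQ0). pose proof (sqrt_pos Q).
    assert (Rabs (f k) <= 2 * INR n * sqrt Q) by nra.
    rewrite <- (pow2_abs (f k)). nra. }
  eapply Rle_trans; [apply rsum_le; exact Hsq|]. rewrite rsum_const. unfold Q, h. right; ring.
Qed.

(* By
   [phibar_minus_phi], gap_diff (j-1) = 2 (phibar_j - phi_j), so all phase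
   errors are gap differences. *)
Definition gap (n : nat) (phi : nat -> R -> R) (k : nat) (t : R) : R :=
  delta n phi (S (k mod n)) t.

Definition gap_diff (n : nat) (phi : nat -> R -> R) (k : nat) (t : R) : R :=
  gap n phi (S k) t - gap n phi k t.

Lemma gap_small n phi k : (k < n)%nat -> gap n phi k = delta n phi (S k).
Proof. intros H. unfold gap. rewrite Nat.mod_small; auto. Qed.

Lemma delta_gap n phi j t : (1 <= j <= n)%nat -> delta n phi j t = gap n phi (j - 1) t.
Proof. intros H. rewrite gap_small by lia. f_equal. lia. Qed.

Lemma gap_eqmod n phi a b : a mod n = b mod n -> gap n phi a = gap n phi b.
Proof. intros H. unfold gap. rewrite H. auto. Qed.

Lemma gap_periodic n phi t : periodic (fun k => gap n phi k t) n.
Proof.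
  intros k. simpl. rewrite (gap_eqmod n phi (k + n) k); auto.
  replace (k + n)%nat with (k + 1 * n)%nat by lia. apply Nat.Div0.mod_add.
Qed.

Lemma gap_diff_periodic n phi t : periodic (fun k => gap_diff n phi k t) n.
Proof.
  intros k. unfold gap_diff. replace (S (k + n)) with (S k + n)%nat by lia.
  rewrite !(gap_periodic n phi t). auto.
Qed.

Lemma gap_diff_mod n phi k t : gap_diff n phi (k mod n) t = gap_diff n phi k t.
Proof.
  unfold gap_diff. rewrite (gap_eqmod n phi (k mod n) k) by apply Nat.Div0.mod_mod.
  rewrite (gap_eqmod n phi (S (k mod n)) (S k)); auto.
  replace (S (k mod n)) with (k mod n + 1)%nat by lia.
  rewrite Nat.Div0.add_mod_idemp_l. f_equal; lia.
Qed.

(* The gap differences have zero mean: the gaps telescope around the cycle. *)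
Lemma gap_diff_sum n phi t : rsum (fun k => gap_diff n phi k t) n = 0.
Proof.
  unfold gap_diff. rewrite (rsum_telescope (fun k => gap n phi k t)).
  pose proof (gap_periodic n phi t O) as E. simpl in E. rewrite E. ring.
Qed.

Lemma delta_1 n phi t : delta n phi 1 t = phi 1%nat t - phi n t + 2 * PI.
Proof. reflexivity. Qed.

Lemma delta_S n phi k t : (1 <= k)%nat -> delta n phi (S k) t = phi (S k) t - phi k t.
Proof.
  intros H. unfold delta. destruct k; [lia|]. simpl. replace (k - 0)%nat with k by lia. reflexivity.
Qed.

Lemma gaps_sum n phi t : (1 <= n)%nat -> rsum (fun k => gap n phi k t) n = 2 * PI.
Proof.
  intros Hn.
  assert (H : forall m, (1 <= m <= n)%nat ->
            rsum (fun k => gap n phi k t) m = phi m t - phi n t + 2 * PI).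
  { intros m [H1 H2]. induction H1.
    - simpl. rewrite gap_small by lia. rewrite delta_1. ring.
    - simpl. rewrite IHle by lia. rewrite gap_small, delta_S by lia. ring. }
  rewrite H by lia. ring.
Qed.

Lemma phibar_minus_phi n phi j t : (2 <= n)%nat -> (1 <= j <= n)%nat ->
  phibar n phi j t - phi j t = gap_diff n phi (j - 1) t / 2.
Proof.
  intros Hn Hj. unfold gap_diff, phibar.
  destruct (Nat.eq_dec j n) as [->|Hjn].
  - replace (S (n - 1)) with (0 + n)%nat by lia. rewrite (gap_periodic n phi t 0%nat).
    rewrite !gap_small by lia. replace (S (n - 1)) with n by lia.
    rewrite (proj2 (Nat.eqb_neq n 1)) by lia. rewrite Nat.eqb_refl, delta_1.
    destruct n as [|[|m]]; [lia|lia|]. rewrite delta_S by lia.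
    replace (S (S m) - 1)%nat with (S m) by lia. field.
  - replace (S (j - 1)) with j by lia. rewrite !gap_small by lia. replace (S (j - 1)) with j by lia.
    rewrite (proj2 (Nat.eqb_neq j n)) by lia.
    destruct (Nat.eq_dec j 1) as [->|Hj1].
    + simpl Nat.eqb. cbv iota. rewrite delta_1, delta_S by lia. field.
    + rewrite (proj2 (Nat.eqb_neq j 1)) by lia. destruct j as [|j']; [lia|].
      rewrite !delta_S by lia.
      replace (S j' + 1)%nat with (S (S j')) by lia. replace (S j' - 1)%nat with j' by lia. field.
Qed.

Lemma delta_min_le n phi t j : (1 <= j <= n)%nat -> delta_min n phi t <= delta n phi j t.
Proof.
  intros Hj. unfold delta_min.
  assert (H : forall a l x, In x l -> fold_right Rmin a l <= x).
  { induction l as [|y l IH]; simpl; [tauto|]. intros x [->|Hx]; [apply Rmin_l|].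
    eapply Rle_trans; [apply Rmin_r|auto]. }
  apply H, (in_map (fun k => delta n phi k t)), in_seq. lia.
Qed.

Lemma delta_min_ge n phi t L : (1 <= n)%nat ->
  (forall j, (1 <= j <= n)%nat -> L <= delta n phi j t) -> L <= delta_min n phi t.
Proof.
  intros Hn H. unfold delta_min.
  assert (Hl : forall x, In x (map (fun k => delta n phi k t) (seq 1 n)) -> L <= x).
  { intros x Hx. apply in_map_iff in Hx. destruct Hx as [j [<- Hj]]. apply in_seq in Hj. apply H. lia. }
  assert (Ha : L <= delta n phi 1 t) by (apply H; lia).
  induction (map (fun k => delta n phi k t) (seq 1 n)) as [|y l IH]; simpl in *; auto.
  apply Rmin_glb; auto.
Qed.

Lemma delta_min_le_mean n phi t : (1 <= n)%nat -> delta_min n phi t <= 2 * PI / INR n.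
Proof.
  intros Hn. assert (Hnpos : 0 < INR n) by (apply lt_0_INR; lia).
  assert (INR n * delta_min n phi t <= 2 * PI).
  { rewrite <- (gaps_sum n phi t Hn), <- rsum_const. apply rsum_le. intros k Hk.
    rewrite gap_small by auto. apply delta_min_le. lia. }
  apply Rmult_le_reg_l with (INR n); [lra|].
  replace (INR n * (2 * PI / INR n)) with (2 * PI) by (field; lra). lra.
Qed.

Lemma Rabs_le_inv x a : Rabs x <= a -> - a <= x <= a.
Proof. unfold Rabs. destruct (Rcase_abs x); intros; lra. Qed.

Lemma sin_PI_div_pos n : (2 <= n)%nat -> 0 < sin (PI / INR n).
Proof.
  intros Hn. assert (Hn2 : 2 <= INR n) by (replace 2 with (INR 2) by (simpl; ring); apply le_INR; lia).
  pose proof PI_RGT_0. apply sin_gt_0; [apply Rdiv_lt_0_compat; lra|].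
  apply Rmult_lt_reg_r with (INR n); [lra|].
  unfold Rdiv. rewrite Rmult_assoc, Rinv_l by lra. nra.
Qed.

Section PhaseDynamics.
Variables (n : nat) (phi : nat -> R -> R) (omega kphi t0 : R).
Hypothesis n_ge2 : (2 <= n)%nat.
Hypothesis kphi_pos : 0 < kphi.
Hypothesis phi_deriv : forall i, (1 <= i <= n)%nat -> forall t, t0 < t ->
  derivable_pt_lim (phi i) t (omega + kphi * (phibar n phi i t - phi i t)).
Hypothesis phi_rc : forall i, (1 <= i <= n)%nat -> right_cont_at (phi i) t0.

Lemma gap_deriv_small k t : (k < n)%nat -> t0 < t ->
  derivable_pt_lim (gap n phi k) t (kphi / 2 * (gap_diff n phi k t - gap_diff n phi (k + n - 1) t)).
Proof.
  intros Hk Ht. rewrite gap_small by auto.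
  destruct k as [|k].
  - apply (dextf (fun y => phi 1%nat y - phi n y + 2 * PI)); [intros; symmetry; apply delta_1|].
    eapply dext.
    + apply dplus; [apply dminus; apply phi_deriv; auto; lia|apply derivable_pt_lim_const].
    + rewrite !phibar_minus_phi by lia. replace (0 + n - 1)%nat with (n - 1)%nat by lia.
      replace (1 - 1)%nat with 0%nat by lia. field.
  - apply (dextf (fun y => phi (S (S k)) y - phi (S k) y)); [intros; symmetry; apply delta_S; lia|].
    eapply dext; [apply dminus; apply phi_deriv; auto; lia|].
    rewrite !phibar_minus_phi by lia. replace (S k + n - 1)%nat with (k + n)%nat by lia.
    rewrite (gap_diff_periodic n phi t k).
    replace (S (S k) - 1)%nat with (S k) by lia. replace (S k - 1)%nat with k by lia. field.
Qed.

Lemma gap_deriv k t : t0 < t ->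
  derivable_pt_lim (gap n phi k) t (kphi / 2 * (gap_diff n phi k t - gap_diff n phi (k + n - 1) t)).
Proof.
  intros Ht. rewrite <- (gap_eqmod n phi (k mod n) k) by apply Nat.Div0.mod_mod.
  eapply dext; [apply gap_deriv_small; auto; apply Nat.mod_upper_bound; lia|].
  rewrite <- (gap_diff_mod n phi k t), <- (gap_diff_mod n phi (k + n - 1) t),
          <- (gap_diff_mod n phi (k mod n + n - 1) t).
  replace (k + n - 1)%nat with (k + (n - 1))%nat by lia.
  replace (k mod n + n - 1)%nat with (k mod n + (n - 1))%nat by lia.
  rewrite Nat.Div0.add_mod_idemp_l. auto.
Qed.

Lemma gap_diff_deriv k t : t0 < t ->
  derivable_pt_lim (gap_diff n phi k) t
    (kphi / 2 * (gap_diff n phi (S k) t - 2 * gap_diff n phi k t + gap_diff n phi (k + n - 1) t)).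
Proof.
  intros Ht. unfold gap_diff at 1.
  eapply dext; [apply (dminus (gap n phi (S k)) (gap n phi k)); apply gap_deriv; auto|].
  replace (S k + n - 1)%nat with (k + n)%nat by lia. rewrite (gap_diff_periodic n phi t k). ring.
Qed.

Lemma gap_rc k s : t0 <= s -> right_cont_at (gap n phi k) s.
Proof.
  intros Hs. apply (rc_of_deriv _ (fun t => kphi / 2 * (gap_diff n phi k t - gap_diff n phi (k + n - 1) t)) t0);
    auto using gap_deriv.
  unfold gap. assert (Hj : (1 <= S (k mod n) <= n)%nat)
    by (pose proof (Nat.mod_upper_bound k n ltac:(lia)); lia).
  destruct (k mod n) as [|j].
  - apply (rc_ext (fun y => phi 1%nat y - phi n y + 2 * PI)); [intros; symmetry; apply delta_1|].
    apply rc_plus; [apply rc_minus; apply phi_rc; lia|apply rc_const].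
  - apply (rc_ext (fun y => phi (S (S j)) y - phi (S j) y)); [intros; symmetry; apply delta_S; lia|].
    apply rc_minus; apply phi_rc; lia.
Qed.

Definition energy (t : R) : R := rsum (fun k => gap_diff n phi k t ^ 2) n.

(* The decay rate provided by [poincare]. *)
Definition energy_rate : R := kphi / (4 * INR n ^ 3).

Lemma energy_rate_pos : 0 < energy_rate.
Proof.
  unfold energy_rate. apply Rdiv_lt_0_compat; [lra|].
  apply Rmult_lt_0_compat; [lra|apply pow_lt, lt_0_INR; lia].
Qed.

(* E' = -kphi sum_k (gap_diff_{k+1} - gap_diff_k)^2 by [cyclic_laplacian],
   and [poincare] turns this into E' <= -energy_rate * E. *)
Lemma energy_decay t : t0 <= t -> energy t <= energy t0 * exp (- energy_rate * (t - t0)).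
Proof.
  intros Ht.
  assert (Hn3 : 0 < 4 * INR n ^ 3) by (apply Rmult_lt_0_compat; [lra|apply pow_lt, lt_0_INR; lia]).
  apply (decay energy
    (fun s => - kphi * rsum (fun k => (gap_diff n phi (S k) s - gap_diff n phi k s) ^ 2) n)); auto.
  - intros s Hs. unfold energy. eapply dext.
    + apply (rsum_deriv (fun k s => gap_diff n phi k s ^ 2)
        (fun k s => 2 * gap_diff n phi k s * (kphi / 2 * (gap_diff n phi (S k) s
                     - 2 * gap_diff n phi k s + gap_diff n phi (k + n - 1) s)))).
      intros k _. apply dsquare, gap_diff_deriv. lra.
    + transitivity (kphi * rsum (fun k => gap_diff n phi k s * (gap_diff n phi (S k) s
                     - 2 * gap_diff n phi k s + gap_diff n phi (k + n - 1) s)) n).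
      { rewrite <- rsum_scal; apply rsum_ext; intros; field. }
      rewrite (cyclic_laplacian (fun k => gap_diff n phi k s)); [ring|lia|apply gap_diff_periodic].
  - intros s Hs.
    pose proof (poincare (fun k => gap_diff n phi k s) n ltac:(lia)
                  (gap_diff_periodic n phi s) (gap_diff_sum n phi s)) as HP.
    unfold energy, energy_rate.
    set (Q := rsum (fun k => (gap_diff n phi (S k) s - gap_diff n phi k s) ^ 2) n) in *.
    set (E := rsum (fun k => gap_diff n phi k s ^ 2) n) in *.
    replace (- (kphi / (4 * INR n ^ 3)) * E) with (- kphi * (E / (4 * INR n ^ 3))) by (field; apply not_0_INR; lia).
    assert (E / (4 * INR n ^ 3) <= Q).
    { apply Rmult_le_reg_r with (4 * INR n ^ 3); [lra|].
      unfold Rdiv. rewrite Rmult_assoc, Rinv_l by lra. lra. }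
    nra.
  - unfold energy. apply (rsum_rc (fun k s => gap_diff n phi k s ^ 2)). intros k _.
    apply (rc_ext (fun y => gap_diff n phi k y * gap_diff n phi k y)); [intros; ring|].
    apply rc_mult; apply rc_minus; apply gap_rc; lra.
Qed.

Lemma gap_diff_sq_bound k t : t0 <= t ->
  gap_diff n phi k t ^ 2 <= energy t0 * exp (- energy_rate * (t - t0)).
Proof.
  intros Ht. eapply Rle_trans; [|apply energy_decay; auto].
  rewrite <- gap_diff_mod. unfold energy.
  apply (rsum_term_le (fun k => gap_diff n phi k t ^ 2)); [intros; apply pow2_ge_0|].
  apply Nat.mod_upper_bound; lia.
Qed.

(* Part (2) for the phases: the phase errors and the frequency errors,
   both multiples of gap differences, converge exponentially. *)
Lemma phase_error_conv i : (1 <= i <= n)%nat ->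
  exp_conv (fun t => phi i t - phibar n phi i t) 0 t0.
Proof.
  intros Hi. apply (exp_conv_of_sq _ 0 t0 (energy t0) energy_rate (1/4)); [apply energy_rate_pos|lra|].
  intros t Ht. replace (phi i t - phibar n phi i t - 0) with (- (phibar n phi i t - phi i t)) by ring.
  rewrite phibar_minus_phi by auto. pose proof (gap_diff_sq_bound (i - 1) t Ht). nra.
Qed.

Lemma frequency_conv i : (1 <= i <= n)%nat ->
  exp_conv (fun t => omega + kphi * (phibar n phi i t - phi i t)) omega t0.
Proof.
  intros Hi.
  apply (exp_conv_of_sq _ omega t0 (energy t0) energy_rate (kphi ^ 2 / 4));
    [apply energy_rate_pos|pose proof (pow2_ge_0 kphi); lra|].
  intros t Ht. rewrite phibar_minus_phi by auto.
  replace ((omega + kphi * (gap_diff n phi (i - 1) t / 2) - omega) ^ 2)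
    with (kphi ^ 2 / 4 * gap_diff n phi (i - 1) t ^ 2) by field.
  apply Rmult_le_compat_l; [pose proof (pow2_ge_0 kphi); lra|apply gap_diff_sq_bound; auto].
Qed.

Lemma gap_diff_eventually_small b : 0 < b ->
  exists T, t0 <= T /\ forall t k, T <= t -> Rabs (gap_diff n phi k t) <= b.
Proof.
  intros Hb. pose proof energy_rate_pos as Hc. set (c := energy_rate) in *.
  set (E0 := energy t0).
  assert (HE0 : 0 <= E0) by (apply rsum_nonneg; intros; apply pow2_ge_0).
  assert (Hb2 : 0 < b ^ 2 * c) by (apply Rmult_lt_0_compat; [apply pow_lt|]; auto).
  assert (HT : 0 <= E0 / (b ^ 2 * c)) by (apply Rmult_le_pos; [lra|left; apply Rinv_0_lt_compat; lra]).
  exists (t0 + E0 / (b ^ 2 * c)). split; [lra|].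
  intros t k Ht. pose proof (gap_diff_sq_bound k t ltac:(lra)) as Hg.
  fold c E0 in Hg.
  assert (Hx : E0 <= b ^ 2 * c * (t - t0)).
  { replace E0 with (b ^ 2 * c * (E0 / (b ^ 2 * c))) by (field; lra).
    apply Rmult_le_compat_l; lra. }
  (* E0 e^{-cs} <= b^2 c s e^{-cs} <= b^2 since c s <= e^{cs}. *)
  assert (Hexp : E0 * exp (- c * (t - t0)) <= b ^ 2).
  { pose proof (exp_ineq1_le (c * (t - t0))). pose proof (exp_pos (- c * (t - t0))).
    assert (E : exp (- c * (t - t0)) * exp (c * (t - t0)) = 1)
      by (rewrite <- exp_plus, <- exp_0; f_equal; ring).
    pose proof (pow2_ge_0 b).
    assert (E0 * exp (- c * (t - t0)) <= b ^ 2 * (c * (t - t0)) * exp (- c * (t - t0)))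
      by (apply Rmult_le_compat_r; lra).
    assert (b ^ 2 * (c * (t - t0)) * exp (- c * (t - t0))
            <= b ^ 2 * exp (c * (t - t0)) * exp (- c * (t - t0)))
      by (apply Rmult_le_compat_r; [lra|apply Rmult_le_compat_l; lra]).
    nra. }
  apply Rabs_le. split; nra.
Qed.


(* The
   penalty P = sum_k negpart(gap_k - m)^2 has P' <= 0: replacing the gap
   excesses by their negative parts only lowers P', which then becomes a
   discrete Laplacian form, nonpositive by [cyclic_laplacian]. *)
Lemma gap_min_principle s m : t0 <= s -> (forall k, (k < n)%nat -> m <= gap n phi k s) ->
  forall t k, s <= t -> (k < n)%nat -> m <= gap n phi k t.
Proof.
  intros Hs Hm t k Hst Hkn.
  set (x := fun k t => gap n phi k t - m).
  set (P := fun t => rsum (fun k => negpart (x k t) ^ 2) n).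
  assert (Hx : forall u j, gap_diff n phi j u = x (S j) u - x j u) by (intros; unfold x, gap_diff; ring).
  assert (HP : P t <= P s).
  { apply (nonincreasing P (fun u => rsum (fun k => 2 * negpart (x k u)
        * (kphi / 2 * (gap_diff n phi k u - gap_diff n phi (k + n - 1) u))) n)); auto.
    - intros u Hu. unfold P. apply (rsum_deriv (fun k t => negpart (x k t) ^ 2) (fun k u =>
        2 * negpart (x k u) * (kphi / 2 * (gap_diff n phi k u - gap_diff n phi (k + n - 1) u)))).
      intros j _.
      apply (negpart_sq_comp_deriv (fun t => x j t)). unfold x.
      eapply dext; [apply dminus; [apply gap_deriv; lra|apply derivable_pt_lim_const]|ring].
    - intros u Hu. set (w := fun k => negpart (x k u)).
      assert (Hwp : periodic w n) by (intros j; unfold w, x; simpl; rewrite (gap_periodic n phi u j); auto).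
      apply Rle_trans with (kphi * rsum (fun k => w k * (w (S k) - 2 * w k + w (k + n - 1)%nat)) n).
      + rewrite <- rsum_scal. apply rsum_le. intros j _.
        rewrite !Hx. replace (S (j + n - 1)) with (j + n)%nat by lia.
        replace (x (j + n)%nat u) with (x j u) by (unfold x; rewrite (gap_periodic n phi u j); auto).
        unfold w. pose proof (negpart_mul_le (x j u) (x (S j) u)).
        pose proof (negpart_mul_le (x j u) (x (j + n - 1)%nat u)).
        pose proof (negpart_mul_self (x j u)). nra.
      + rewrite cyclic_laplacian by (auto; lia).
        pose proof (rsum_nonneg (fun k => (w (S k) - w k) ^ 2) n ltac:(intros; apply pow2_ge_0)). nra.
    - unfold P. apply (rsum_rc (fun k t => negpart (x k t) ^ 2)). intros j _.
      apply (negpart_sq_rc (fun t => x j t)). apply rc_minus; [apply gap_rc; lra|apply rc_const]. }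
  assert (HPs : P s = 0).
  { unfold P. replace 0 with (rsum (fun _ => 0) n) by (rewrite rsum_const; ring). apply rsum_ext.
    intros j Hj. unfold negpart, x. rewrite Rmin_left by (specialize (Hm j Hj); lra). ring. }
  assert (Hxk : negpart (x k t) ^ 2 <= 0).
  { rewrite <- HPs. eapply Rle_trans; [|exact HP].
    apply (rsum_term_le (fun k => negpart (x k t) ^ 2) n); auto. intros; apply pow2_ge_0. }
  apply negpart_sq_zero in Hxk. unfold x in Hxk. lra.
Qed.

Lemma delta_min_nondecreasing s t : t0 <= s -> s <= t -> delta_min n phi s <= delta_min n phi t.
Proof.
  intros Hs Hst. apply delta_min_ge; [lia|]. intros j Hj. rewrite delta_gap by auto.
  apply (gap_min_principle s); auto; try lia.
  intros k Hk. rewrite gap_small by lia. apply delta_min_le. lia.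
Qed.

Hypothesis delta_pos0 : forall k, (1 <= k <= n)%nat -> 0 < delta n phi k t0.

Lemma delta_min_pos t : t0 <= t -> 0 < delta_min n phi t.
Proof.
  intros Ht. apply Rlt_le_trans with (delta_min n phi t0); [|apply delta_min_nondecreasing; lra].
  unfold delta_min.
  assert (H : forall l a, 0 < a -> (forall x, In x l -> 0 < x) -> 0 < fold_right Rmin a l).
  { induction l as [|y l IH]; simpl; intros a Ha Hl; auto. apply Rmin_glb_lt; auto. }
  apply H; [apply delta_pos0; lia|].
  intros x Hx. apply in_map_iff in Hx. destruct Hx as [j [<- Hj]]. apply in_seq in Hj. apply delta_pos0. lia.
Qed.

Lemma phi_increasing t i j : t0 <= t -> (1 <= i)%nat -> (i <= j <= n)%nat -> phi i t <= phi j t.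
Proof.
  intros Ht Hi [Hij Hjn]. induction Hij; [lra|].
  pose proof (delta_min_le n phi t (S m) ltac:(lia)). rewrite delta_S in H by lia.
  pose proof (delta_min_pos t Ht). assert (phi i t <= phi m t) by (apply IHHij; lia). lra.
Qed.

Lemma phi_gap t i j : t0 <= t -> (1 <= i)%nat -> (i < j <= n)%nat ->
  delta_min n phi t <= phi j t - phi i t <= 2 * PI - delta_min n phi t.
Proof.
  intros Ht Hi Hij. split.
  - destruct j as [|j]; [lia|].
    pose proof (delta_min_le n phi t (S j) ltac:(lia)). rewrite delta_S in H by lia.
    pose proof (phi_increasing t i j Ht Hi ltac:(lia)). lra.
  - pose proof (delta_min_le n phi t 1 ltac:(lia)). rewrite delta_1 in H.
    pose proof (phi_increasing t j n Ht ltac:(lia) ltac:(lia)).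
    pose proof (phi_increasing t 1 i Ht ltac:(lia) ltac:(lia)). lra.
Qed.

Lemma delta_min_le_PI t : t0 <= t -> delta_min n phi t <= PI.
Proof.
  intros Ht. pose proof (delta_min_le n phi t 1 ltac:(lia)). pose proof (delta_min_le n phi t 2 ltac:(lia)).
  rewrite delta_1 in H. rewrite delta_S in H0 by lia.
  pose proof (phi_increasing t 2 n Ht ltac:(lia) ltac:(lia)). lra.
Qed.

Lemma phase_separation t i j : t0 <= t -> (1 <= i <= n)%nat -> (1 <= j <= n)%nat -> i <> j ->
  delta_min n phi t <= Rabs (phi j t - phi i t) <= 2 * PI - delta_min n phi t.
Proof.
  intros Ht Hi Hj Hij. pose proof (delta_min_pos t Ht). destruct (Nat.lt_ge_cases i j).
  - pose proof (phi_gap t i j Ht ltac:(lia) ltac:(lia)). rewrite Rabs_right; lra.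
  - pose proof (phi_gap t j i Ht ltac:(lia) ltac:(lia)). rewrite Rabs_left1; lra.
Qed.

Lemma sigma_eq r t : t0 <= t -> Defs.sigma r n phi t = r / sin (delta_min n phi t / 2).
Proof.
  intros Ht. unfold Defs.sigma. rewrite Rabs_right; auto.
  pose proof (delta_min_pos t Ht). pose proof (delta_min_le_PI t Ht).
  left. apply sin_gt_0; lra.
Qed.

Lemma sigma_nonincreasing r s t : 0 < r -> t0 <= s -> s <= t -> Defs.sigma r n phi t <= Defs.sigma r n phi s.
Proof.
  intros Hr Hs Hst. rewrite !sigma_eq by lra.
  pose proof (delta_min_pos s Hs). pose proof (delta_min_le_PI t ltac:(lra)).
  pose proof (delta_min_nondecreasing s t Hs Hst).
  assert (0 < sin (delta_min n phi s / 2)) by (apply sin_gt_0; lra).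
  assert (sin (delta_min n phi s / 2) <= sin (delta_min n phi t / 2)) by (apply sin_incr_1; lra).
  unfold Rdiv. apply Rmult_le_compat_l; [lra|]. apply Rinv_le_contravar; lra.
Qed.

(* Consensus of the gap differences makes every gap, hence delta_min,
   eventually as close as we like to the mean gap 2 PI / n. *)
Lemma delta_min_eventually_ge ep : 0 < ep ->
  exists T, t0 <= T /\ forall t, T <= t -> 2 * PI / INR n - ep <= delta_min n phi t.
Proof.
  intros Hep. assert (Hnpos : 0 < INR n) by (apply lt_0_INR; lia).
  destruct (gap_diff_eventually_small (ep / (2 * INR n))) as [T [HT Hsmall]];
    [apply Rdiv_lt_0_compat; lra|].
  exists T. split; auto. intros t Ht.
  assert (Hnear : forall k, (k <= n)%nat -> Rabs (gap n phi k t - gap n phi 0 t) <= ep / 2).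
  { intros k Hkn. rewrite <- (rsum_telescope (fun m => gap n phi m t)).
    eapply Rle_trans; [apply rsum_abs|].
    eapply Rle_trans; [apply (rsum_le _ (fun _ => ep / (2 * INR n))); intros; apply Hsmall; auto|].
    rewrite rsum_const. apply Rle_trans with (INR n * (ep / (2 * INR n))); [|right; field; lra].
    apply Rmult_le_compat_r; [left; apply Rdiv_lt_0_compat; lra|apply le_INR; auto]. }
  assert (Hgap : forall k, (k < n)%nat -> 2 * PI / INR n - ep <= gap n phi k t).
  { intros k Hkn.
    assert (E : INR n * gap n phi k t = rsum (fun j => gap n phi k t - gap n phi j t) n + 2 * PI)
      by (rewrite rsum_minus, rsum_const, gaps_sum by lia; ring).
    assert (rsum (fun j => - ep) n <= rsum (fun j => gap n phi k t - gap n phi j t) n).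
    { apply rsum_le. intros j Hj. pose proof (Hnear k ltac:(lia)). pose proof (Hnear j ltac:(lia)).
      apply Rabs_le_inv in H. apply Rabs_le_inv in H0. lra. }
    rewrite rsum_const in H. apply Rmult_le_reg_l with (INR n); [lra|].
    replace (INR n * (2 * PI / INR n - ep)) with (INR n * - ep + 2 * PI) by (field; lra). lra. }
  apply delta_min_ge; [lia|]. intros j Hj. rewrite delta_gap by auto. apply Hgap. lia.
Qed.

Lemma sin_lipschitz a b : Rabs (sin a - sin b) <= Rabs (a - b).
Proof.
  assert (K : forall a b, a < b -> Rabs (sin b - sin a) <= b - a).
  { intros x y Hxy. destruct (MVT_cor2 sin cos x y Hxy) as [c [Hc _]].
    { intros; apply derivable_pt_lim_sin. }
    rewrite Hc, Rabs_mult, (Rabs_right (y - x)) by lra.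
    pose proof (COS_bound c). assert (Rabs (cos c) <= 1) by (apply Rabs_le; lra). nra. }
  destruct (Rtotal_order a b) as [H|[H|H]].
  - rewrite <- Rabs_Ropp, Ropp_minus_distr, (Rabs_left (a - b)) by lra. specialize (K a b H). lra.
  - subst. rewrite !Rminus_diag, Rabs_R0. lra.
  - rewrite (Rabs_right (a - b)) by lra. apply K; auto.
Qed.

(* Hence sigma eventually drops below any level above r / |sin(PI/n)|,
   the safety radius of the evenly spread formation. *)
Lemma sigma_eventually_le r eta : 0 < r -> 0 < eta ->
  exists T, t0 <= T /\ forall t, T <= t -> Defs.sigma r n phi t <= r / Rabs (sin (PI / INR n)) + eta.
Proof.
  intros Hr Heta.
  assert (Hnpos : 0 < INR n) by (apply lt_0_INR; lia).
  pose proof (sin_PI_div_pos n n_ge2) as Hs0.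
  set (x0 := PI / INR n) in *. set (s0 := sin x0) in *.
  rewrite (Rabs_right s0) by lra.
  set (ep := Rmin (s0 / 2) (eta * s0 ^ 2 / (2 * r))).
  assert (Hep : 0 < ep)
    by (apply Rmin_glb_lt; [lra|apply Rdiv_lt_0_compat; [apply Rmult_lt_0_compat; [lra|apply pow_lt; lra]|lra]]).
  assert (Hep1 : ep <= s0 / 2) by apply Rmin_l.
  assert (Hep2 : ep <= eta * s0 ^ 2 / (2 * r)) by apply Rmin_r.
  destruct (delta_min_eventually_ge (2 * ep) ltac:(lra)) as [T [HT Hdm]].
  exists T. split; auto. intros t Ht.
  pose proof (Hdm t Ht). pose proof (delta_min_le_mean n phi t ltac:(lia)).
  replace (2 * PI / INR n) with (2 * x0) in * by (unfold x0; field; lra).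
  assert (Hsin : s0 - ep <= sin (delta_min n phi t / 2)).
  { pose proof (sin_lipschitz (delta_min n phi t / 2) x0).
    assert (Rabs (delta_min n phi t / 2 - x0) <= ep) by (apply Rabs_le; lra).
    assert (Hh : Rabs (sin (delta_min n phi t / 2) - s0) <= ep) by (unfold s0; lra).
    apply Rabs_le_inv in Hh. lra. }
  rewrite sigma_eq by lra.
  set (s := sin (delta_min n phi t / 2)) in *.
  assert (r / s - r / s0 <= eta); [|lra].
  replace (r / s - r / s0) with (r * (s0 - s) / (s * s0)) by (field; lra).
  assert (Hinv : 0 < / (s * s0)) by (apply Rinv_0_lt_compat; nra).
  destruct (Rle_dec s0 s) as [Hle|Hlt].
  { apply Rle_trans with 0; [|lra]. unfold Rdiv. assert (r * (s0 - s) <= 0) by nra. nra. }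
  apply Rle_trans with (r * ep / (s0 / 2 * s0)).
  - unfold Rdiv. apply Rmult_le_compat; try nra.
    apply Rinv_le_contravar; nra.
  - apply Rle_trans with (r * (eta * s0 ^ 2 / (2 * r)) / (s0 / 2 * s0)); [|right; field; lra].
    unfold Rdiv. apply Rmult_le_compat_r; [left; apply Rinv_0_lt_compat; nra|].
    apply Rmult_le_compat_l; lra.
Qed.

End PhaseDynamics.

Lemma cos_le_of_sep dm th : 0 < dm <= PI -> dm <= Rabs th <= 2 * PI - dm -> cos th <= cos dm.
Proof.
  intros Hd Ht.
  assert (E : cos th = cos (Rabs th)).
  { destruct (Rle_dec 0 th); [rewrite Rabs_right; lra|]. rewrite Rabs_left by lra. rewrite cos_neg; auto. }
  rewrite E. set (u := Rabs th) in *.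
  destruct (Rle_dec u PI); [apply cos_decr_1; lra|].
  replace (cos u) with (cos (2 * PI - u)) by (rewrite cos_minus, cos_2PI, sin_2PI; ring).
  apply cos_decr_1; lra.
Qed.

(* Law of cosines with cos th <= 1 - 2 sin^2(dm/2). *)
Lemma dist_radicand_lower a b pa pb za zb dm : 0 < dm <= PI ->
  dm <= Rabs (pb - pa) <= 2 * PI - dm -> 0 < a -> 0 < b ->
  (a - b) ^ 2 + 4 * a * b * sin (dm / 2) ^ 2
  <= a ^ 2 + b ^ 2 - 2 * a * b * cos (pb - pa) + (zb - za) ^ 2.
Proof.
  intros Hdm Hth Ha Hb.
  assert (Hc : cos (pb - pa) <= cos dm) by (apply cos_le_of_sep; auto).
  assert (Hc2 : cos dm = 1 - 2 * sin (dm / 2) ^ 2).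
  { replace dm with (2 * (dm / 2)) at 1 by field. rewrite cos_2a_sin. ring. }
  pose proof (pow2_ge_0 (zb - za)). assert (0 < a * b) by nra. nra.
Qed.

Lemma Dist_gt a b pa pb za zb dm r : 0 < r -> 0 < dm <= PI ->
  dm <= Rabs (pb - pa) <= 2 * PI - dm -> 0 < a -> 0 < b ->
  (2 * r <= Rabs (a - b) \/ r / sin (dm / 2) + 2 * r <= b \/ r / sin (dm / 2) + 2 * r <= a) ->
  2 * r < Dist a pa za b pb zb.
Proof.
  intros Hr Hdm Hth Ha Hb Hcase.
  pose proof (dist_radicand_lower a b pa pb za zb dm Hdm Hth Ha Hb) as HX.
  set (s := sin (dm / 2)) in *.
  assert (Hs : 0 < s) by (apply sin_gt_0; lra).
  assert (Hgoal : (2 * r) ^ 2 < (a - b) ^ 2 + 4 * a * b * s ^ 2).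
  { assert (Hab : 0 < a * b * s ^ 2) by (apply Rmult_lt_0_compat; nra).
    destruct (Rle_dec (2 * r) (Rabs (a - b))) as [H|H].
    -
      assert ((2 * r) ^ 2 <= (a - b) ^ 2) by (rewrite <- (pow2_abs (a - b)); apply pow_incr; lra).
      nra.
    - (* radially close, so both lie beyond r / s: then a s b s > r^2 *)
      assert (Hbig : r / s + 2 * r <= b \/ r / s + 2 * r <= a) by (destruct Hcase as [?|[?|?]]; [lra|auto|auto]).
      assert (Hrs : r / s * s = r) by (field; lra).
      assert (Hclose : Rabs (a - b) < 2 * r) by lra. apply Rabs_def2 in Hclose.
      assert (Has : r < a * s /\ r < b * s) by (destruct Hbig; split; nra).
      assert (r * r < (a * s) * (b * s)) by (apply Rmult_le_0_lt_compat; lra).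
      pose proof (pow2_ge_0 (a - b)). nra. }
  unfold Dist. rewrite <- (sqrt_pow2 (2 * r)) by lra.
  apply sqrt_lt_1_alt. split; [apply pow2_ge_0|lra].
Qed.

Lemma lam_zero r e rh sg : rh < sg + 2 * r -> lam r e rh sg = 0.
Proof. intros H. unfold lam. destruct (Rlt_dec rh (sg + 2 * r)); [auto|lra]. Qed.

Lemma lam_bounds r e rh sg : 0 < e -> 0 <= lam r e rh sg <= 1.
Proof.
  intros He. unfold lam. destruct (Rlt_dec rh (sg + 2 * r)); [lra|].
  destruct (Rlt_dec (sg + 2 * r + e) rh); [lra|].
  split; [apply Rmult_le_pos; [lra|left; apply Rinv_0_lt_compat; lra]|].
  apply Rmult_le_reg_r with e; auto. unfold Rdiv. rewrite Rmult_assoc, Rinv_l by lra. lra.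
Qed.

Lemma lam_lower r e rh sg eta : 0 < e -> 0 < eta -> eta <= rh - sg - 2 * r ->
  Rmin 1 (eta / e) <= lam r e rh sg.
Proof.
  intros He Heta H. unfold lam. destruct (Rlt_dec rh (sg + 2 * r)); [lra|].
  destruct (Rlt_dec (sg + 2 * r + e) rh); [apply Rmin_l|].
  eapply Rle_trans; [apply Rmin_r|]. unfold Rdiv.
  apply Rmult_le_compat_r; [left; apply Rinv_0_lt_compat; lra|lra].
Qed.

Section Radial.
Variables (r e rhostar krho t0 : R) (sig rho : R -> R).
Hypothesis e_pos : 0 < e.
Hypothesis krho_pos : 0 < krho.
Hypothesis rho_deriv : forall t, t0 < t ->
  derivable_pt_lim rho t (lam r e (rho t) (sig t) * krho * (rhostar - rho t)).
Hypothesis rho_rc : right_cont_at rho t0.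

(* With a nonincreasing safety radius, a robot either has not moved yet or
   is outside the current safety disc: while rho(s) < sig(t1) + 2r <= sig(s)
   + 2r the gain vanishes, so negpart(rho - sig(t1) - 2r)^2 is constant. *)
Lemma rho_frozen_or_safe t1 : (forall s t, t0 <= s -> s <= t -> sig t <= sig s) -> t0 <= t1 ->
  rho t1 = rho t0 \/ sig t1 + 2 * r <= rho t1.
Proof.
  intros Hsig Ht1. destruct (Rle_dec (sig t1 + 2 * r) (rho t1)) as [H|H]; [right; auto|left].
  set (c := sig t1 + 2 * r).
  assert (Heq : negpart (rho t1 - c) ^ 2 = negpart (rho t0 - c) ^ 2).
  { apply (constant_of_zero_deriv (fun t => negpart (rho t - c) ^ 2)
      (fun t => 2 * negpart (rho t - c) * (lam r e (rho t) (sig t) * krho * (rhostar - rho t)))); auto.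
    - intros u Hu. apply (negpart_sq_comp_deriv (fun t => rho t - c)).
      eapply dext; [apply dminus; [apply rho_deriv; lra|apply derivable_pt_lim_const]|ring].
    - intros u Hu. unfold negpart, Rmin. destruct (Rle_dec 0 (rho u - c)); [ring|].
      rewrite lam_zero; [ring|]. pose proof (Hsig u t1 ltac:(lra) ltac:(lra)). unfold c in *. lra.
    - apply (negpart_sq_rc (fun t => rho t - c)), rc_minus; auto using rc_const. }
  unfold negpart, Rmin in Heq.
  destruct (Rle_dec 0 (rho t1 - c)); [unfold c in *; lra|].
  destruct (Rle_dec 0 (rho t0 - c)); [nra|].
  assert (Hz : (rho t1 - rho t0) * (rho t1 + rho t0 - 2 * c) = 0) by nra.
  apply Rmult_integral in Hz. destruct Hz; lra.
Qed.

Let gain (t : R) : R := krho * lam r e (rho t) (sig t).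

Lemma rho_error_deriv t : t0 < t ->
  derivable_pt_lim (fun t => rho t - rhostar) t (- gain t * (rho t - rhostar)).
Proof.
  intros Ht. unfold gain.
  eapply dext; [apply dminus; [apply rho_deriv; auto|apply derivable_pt_lim_const]|ring].
Qed.

Lemma gain_nonneg t : t0 < t -> 0 <= gain t.
Proof. intros _. unfold gain. pose proof (lam_bounds r e (rho t) (sig t) e_pos). nra. Qed.

(* rho never drops below min(rho(t0), rhostar): above rhostar the error
   keeps its sign, below it the error only shrinks in absolute value. *)
Lemma rho_lower t : t0 <= t -> Rmin (rho t0) rhostar <= rho t.
Proof.
  intros Ht. set (y := fun t => rho t - rhostar).
  assert (Hyrc : right_cont_at y t0) by (apply rc_minus; auto using rc_const).
  destruct (Rle_dec rhostar (rho t0)) as [Hc|Hc].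
  - pose proof (lin_sign y gain t0 rho_error_deriv gain_nonneg Hyrc t ltac:(unfold y; lra) Ht).
    unfold y in *. pose proof (Rmin_r (rho t0) rhostar). lra.
  - pose proof (lin_abs_nonincreasing y gain t0 rho_error_deriv gain_nonneg Hyrc t Ht).
    unfold y in *. rewrite Rmin_left by lra. nra.
Qed.

Lemma rho_conv theta : theta + 2 * r < rhostar -> theta + 2 * r < rho t0 ->
  (forall eta, 0 < eta -> exists T, t0 <= T /\ forall t, T <= t -> sig t <= theta + eta) ->
  exp_conv rho rhostar t0.
Proof.
  intros H1 H2 Hev.
  set (m := Rmin (rho t0) rhostar).
  assert (Hm : theta + 2 * r < m) by (unfold m; apply Rmin_glb_lt; auto).
  set (eta := (m - theta - 2 * r) / 2).
  destruct (Hev eta ltac:(unfold eta; lra)) as [T [HT HTs]].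
  set (l0 := Rmin 1 (eta / e)).
  assert (Hl0 : 0 < l0) by (apply Rmin_glb_lt; [lra|apply Rdiv_lt_0_compat; unfold eta; lra]).
  assert (Hconv : exp_conv (fun t => rho t - rhostar) 0 t0).
  { apply (lin_exp_conv _ gain t0 T (krho * l0)); auto using rho_error_deriv, gain_nonneg.
    - apply rc_minus; auto using rc_const.
    - nra.
    - intros s Hs. unfold gain. apply Rmult_le_compat_l; [lra|]. apply lam_lower; auto; [unfold eta; lra|].
      pose proof (HTs s ltac:(lra)). pose proof (rho_lower s ltac:(lra)) as Hl. fold m in Hl. unfold eta in *. lra. }
  destruct Hconv as [C [a [Ha HC]]]. exists C, a. split; auto.
  intros t Ht. specialize (HC t Ht). rewrite Rminus_0_r in HC. exact HC.
Qed.

End Radial.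

(* At time t every robot is either still at its initial radius
   or outside the safety disc of radius sigma(t) + 2r = r / sin(dm/2) + 2r,
   with dm = delta_min(t) the phase separation; [Dist_gt] concludes in each
   case, the case of two unmoved robots using the initial radial spacing. *)
Lemma collision_avoidance (n : nat) (r eps_r rhostar omega krho kphi t0 : R)
  (rho phi z : nat -> R -> R) :
  (2 <= n)%nat -> 0 < r -> 0 < kphi ->
  (forall i, (1 <= i <= n)%nat -> forall t, t0 < t ->
     derivable_pt_lim (phi i) t (omega + kphi * (phibar n phi i t - phi i t))) ->
  (forall i, (1 <= i <= n)%nat -> right_cont_at (phi i) t0) ->
  (forall i, (1 <= i <= n)%nat -> forall t, t0 < t ->
     derivable_pt_lim (rho i) t
       (lam r eps_r (rho i t) (Defs.sigma r n phi t) * krho * (rhostar - rho i t))) ->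
  (forall i, (1 <= i <= n)%nat -> right_cont_at (rho i) t0) ->
  (forall k, (1 <= k <= n)%nat -> 0 < delta n phi k t0) ->
  (forall i, (1 <= i <= n)%nat -> 0 < rho i t0) ->
  (forall i j, (1 <= i <= n)%nat -> (1 <= j <= n)%nat -> i <> j ->
     2 * r <= Rabs (rho i t0 - rho j t0)) ->
  forall i j, (1 <= i <= n)%nat -> (1 <= j <= n)%nat -> i <> j ->
  forall t, t0 <= t -> 2 * r < Dist (rho i t) (phi i t) (z i t) (rho j t) (phi j t) (z j t).
Proof.
  intros Hn Hr Hk Hphi Hphirc Hrho Hrhorc Hpos Hrho0 Hsep i j Hi Hj Hij t Ht.
  set (dm := delta_min n phi t).
  assert (Hdm : 0 < dm <= PI)
    by (split; [apply (delta_min_pos n phi omega kphi t0)|apply (delta_min_le_PI n phi omega kphi t0)]; auto).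
  assert (Hsg : 0 < r / sin (dm / 2)) by (apply Rdiv_lt_0_compat; [|apply sin_gt_0]; lra).
  assert (Hcases : forall a, (1 <= a <= n)%nat -> rho a t = rho a t0 \/ r / sin (dm / 2) + 2 * r <= rho a t).
  { intros a Ha. unfold dm. rewrite <- (sigma_eq n phi omega kphi t0) by auto.
    apply (rho_frozen_or_safe r eps_r rhostar krho t0); auto.
    intros s u Hs Hsu. apply (sigma_nonincreasing n phi omega kphi t0); auto. }
  assert (Hrpos : forall a, (1 <= a <= n)%nat -> 0 < rho a t)
    by (intros a Ha; destruct (Hcases a Ha) as [->|]; [apply Hrho0|lra]; auto).
  apply (Dist_gt _ _ _ _ _ _ dm r); auto.
  - apply (phase_separation n phi omega kphi t0); auto.
  - destruct (Hcases i Hi) as [->| ]; destruct (Hcases j Hj) as [->| ]; auto.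
Qed.

Theorem mainTheorem10
  (n : nat) (r eps_r rhostar omega krho kz kphi t0 : R)
  (rho phi z : nat -> R -> R) :
  (2 <= n)%nat -> 0 < r -> 0 < eps_r -> 0 < rhostar ->
  0 < krho -> 0 < kz -> 0 < kphi ->
  closed_loop_solution n r eps_r rhostar omega krho kz kphi t0 rho phi z ->
  (forall k, (1 <= k <= n)%nat -> 0 < delta n phi k t0) ->
  (* (1) collision avoidance *)
  ((forall i, (1 <= i <= n)%nat -> r / Rabs (sin (PI / INR n)) + 2 * r < rho i t0) ->
   (forall i j, (1 <= i <= n)%nat -> (1 <= j <= n)%nat -> i <> j ->
      2 * r <= Rabs (rho i t0 - rho j t0)) ->
   forall i j, (1 <= i <= n)%nat -> (1 <= j <= n)%nat -> i <> j ->
   forall t, t0 <= t ->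
     2 * r < Dist (rho i t) (phi i t) (z i t) (rho j t) (phi j t) (z j t))
  /\
  (* (2) exponential convergence *)
  (forall i, (1 <= i <= n)%nat ->
     exp_conv (fun t => phi i t - phibar n phi i t) 0 t0 /\
     exp_conv (fun t => omega + kphi * (phibar n phi i t - phi i t)) omega t0 /\
     exp_conv (z i) 0 t0 /\
     (r / Rabs (sin (PI / INR n)) + 2 * r < rhostar ->
      r / Rabs (sin (PI / INR n)) + 2 * r < rho i t0 ->
      (forall j, (1 <= j <= n)%nat -> j <> i -> 2 * r <= Rabs (rho i t0 - rho j t0)) ->
      exp_conv (rho i) rhostar t0)).
Proof.
  intros Hn Hr He Hrs Hkr Hkz Hk Hsol Hpos.
  assert (Hphi : forall i, (1 <= i <= n)%nat -> forall t, t0 < t ->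
    derivable_pt_lim (phi i) t (omega + kphi * (phibar n phi i t - phi i t)))
    by (intros i Hi t Ht; apply (Hsol i Hi); auto).
  assert (Hphirc : forall i, (1 <= i <= n)%nat -> right_cont_at (phi i) t0)
    by (intros i Hi; apply (Hsol i Hi)).
  assert (Hrad : 0 < r / Rabs (sin (PI / INR n)))
    by (apply Rdiv_lt_0_compat, Rabs_pos_lt, Rgt_not_eq, sin_PI_div_pos; auto).
  split.
  - intros Hinit Hsep. apply (collision_avoidance n r eps_r rhostar omega krho kphi t0); auto.
    + intros i Hi t Ht. apply (Hsol i Hi); auto.
    + intros i Hi. apply (Hsol i Hi).
    + intros i Hi. pose proof (Hinit i Hi). lra.
  - intros i Hi. destruct (Hsol i Hi) as [Hrhorc [_ [Hzrc Hd]]].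
    split; [|split; [|split]].
    + apply (phase_error_conv n phi omega kphi t0); auto.
    + apply (frequency_conv n phi omega kphi t0); auto.
    + apply (lin_exp_conv (z i) (fun _ => kz) t0 t0 kz); auto; try (intros; lra).
      intros t Ht. apply Hd; auto.
    + intros Hstar Hinit _.
      apply (rho_conv r eps_r rhostar krho t0 (Defs.sigma r n phi) (rho i))
        with (theta := r / Rabs (sin (PI / INR n))); auto.
      * intros t Ht. apply Hd; auto.
      * intros eta Heta. apply (sigma_eventually_le n phi omega kphi t0); auto.
Qed.
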